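(* Let $n\ge1$, $r\ge1$ and $\underline{m}=(m_0,\dots,m_n)$ positive integers. For each $i\in\{0,\dots,n\}$ and each $k\in S_i$ there is a path from $v_0^0$ to $v_i^k$ in the graph $\overline{L}_{2n+1}^{r;\underline{m}}$.
   Context: A path in a directed graph is a finite nonempty sequence $e_1\cdots e_k$ of edges with $r(e_i)=s(e_{i+1})$, from $s(e_1)$ to $r(e_k)$. $\Lambda=L_{2n+1}\times_c\mathbb{Z}_r$ is the graph with vertices $(v_i,k)$, $0\le i\le n$, $k\in\mathbb{Z}_r$, and edges $(e_{ij},k)$, $0\le i\le j\le n$, $k\in\mathbb{Z}_r$, with source $(v_i,k-m_i\bmod r)$ and range $(v_j,k)$. A path from $(v_i,s)$ to $(v_j,t)$ is admissible if none of the vertices it passes through other than its source and range lies in $\{(v_\ell,k): i\le\ell\le j,\ 0\le k\le\gcd(m_\ell,r)-1\}$; $n_{ij}^{st}$ is the number of such paths. $H$ is the smallest hereditary subset of $\Lambda^0$ (closed under following paths) containing all $(v_i,0)$, and $S_i=\{k\in\{0,\dots,\gcd(m_i,r)-1\}:(v_i,k)\in H\}$. The graph $\overline{L}_{2n+1}^{r;\underline{m}}$ has vertices $v_i^k$ ($k\in S_i$) and edges $e_{ij;a}^{st}$ ($0\le i\le j\le n$, $s\in S_i$, $t\in S_j$, $1\le a\le n_{ij}^{st}$) from $v_i^s$ to $v_j^t$. *)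

From mathcomp Require Import all_boot.
From Stdlib Require Import ClassicalEpsilon.

Set Implicit Arguments.
Unset Strict Implicit.
Unset Printing Implicit Defensive.

(* Vertices (v_i, k) of Lambda = L_{2n+1} x_c Z_r are encoded as pairs (i, k)
   with i <= n and k < r (Z_r represented by {0,..,r-1}). *)
Definition vtx := (nat * nat)%type.

(* Edges (e_{ij}, k) of Lambda are encoded as triples (i, j, k). *)
Definition Ledge := (nat * nat * nat)%type.

Definition L_valid (n r : nat) (e : Ledge) : Prop :=
  let '(i, j, k) := e in (i <= j <= n) && (k < r).

(* source of (e_{ij},k) is (v_i, k - m_i mod r) *)
Definition L_src (r : nat) (m : nat -> nat) (e : Ledge) : vtx :=
  let '(i, j, k) := e in (i, (k + r - m i %% r) %% r).

Definition L_rng (e : Ledge) : vtx :=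
  let '(i, j, k) := e in (j, k).

Definition is_path {E V : Type} (valid : E -> Prop) (src rng : E -> V)
    (u w : V) (p : seq E) : Prop :=
  match p with
  | [::] => False
  | e0 :: _ =>
      src e0 = u /\ rng (last e0 p) = w /\
      (forall l, l < size p -> valid (nth e0 p l)) /\
      (forall l, l.+1 < size p -> rng (nth e0 p l) = src (nth e0 p l.+1))
  end.

Definition admissible (n r : nat) (m : nat -> nat) (i j s t : nat)
    (p : seq Ledge) : Prop :=
  is_path (L_valid n r) (L_src r m) L_rng (i, s) (j, t) p /\
  (forall l, l.+1 < size p ->
     let v := L_rng (nth (0, 0, 0) p l) in
     ~~ ((i <= v.1 <= j) && (v.2 < gcdn (m v.1) r))).

(* n_{ij}^{st} : the number of admissible paths, i.e. the (unique) N such that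
   the admissible paths can be listed without repetition in a list of length N. *)
Definition nadm (n r : nat) (m : nat -> nat) (i j s t : nat) : nat :=
  epsilon (inhabits 0)
    (fun N => exists L : seq (seq Ledge),
        uniq L /\ (forall p, p \in L <-> admissible n r m i j s t p) /\
        size L = N).

Definition hereditary (n r : nat) (m : nat -> nat) (X : vtx -> Prop) : Prop :=
  forall e, L_valid n r e -> X (L_src r m e) -> X (L_rng e).

Definition inH (n r : nat) (m : nat -> nat) (v : vtx) : Prop :=
  forall X : vtx -> Prop, hereditary n r m X ->
    (forall i, i <= n -> X (i, 0)) -> X v.

Definition inS (n r : nat) (m : nat -> nat) (i k : nat) : Prop :=
  k < gcdn (m i) r /\ inH n r m (i, k).

(* The graph \bar L_{2n+1}^{r;m}: vertices v_i^k (i <= n, k in S_i),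
   edges e_{ij;a}^{st} encoded as (i, j, s, t, a) with i <= j <= n,
   s in S_i, t in S_j, 1 <= a <= n_{ij}^{st}; from v_i^s to v_j^t. *)
Definition Bedge := (nat * nat * nat * nat * nat)%type.

Definition B_valid (n r : nat) (m : nat -> nat) (e : Bedge) : Prop :=
  let '(i, j, s, t, a) := e in
  (i <= j <= n) /\ inS n r m i s /\ inS n r m j t /\
  (1 <= a <= nadm n r m i j s t).

Definition B_src (e : Bedge) : vtx := let '(i, j, s, t, a) := e in (i, s).
Definition B_rng (e : Bedge) : vtx := let '(i, j, s, t, a) := e in (j, t).

(* A path of Lambda whose intermediate vertices avoid the representatives
   (v_l, k), k < gcd(m_l, r), is admissible, so it yields an edge of
   \bar L_{2n+1}^{r;m} between its endpoints as soon as they are vertices of it.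
   Call a vertex anchored if it lies in H and ends such a path starting at v_0^0
   or at a vertex already reachable from v_0^0.  Anchored vertices form a
   hereditary set: an edge leaving an anchored representative starts a new path
   (the representative being reachable by one more edge), any other edge extends
   the old one.  Every (v_l, 0) is anchored (loop r - 1 times at level 0, then
   jump), hence so is all of H, and appending one edge reaches every anchored
   vertex of the graph from v_0^0.
   The edge exists only if n_ij^st > 0, i.e. if admissible paths can be listed:
   their length is bounded because (n - level, number of loops to the next
   representative) decreases lexicographically along them. *)

From Stdlib Require Import ClassicalEpsilon.
From mathcomp Require Import all_boot zify.

Set Implicit Arguments.
Unset Strict Implicit.
Unset Printing Implicit Defensive.

Section Chains.

Variables (E V : Type) (valid : E -> Prop) (src rng : E -> V).

Fixpoint chain (u : V) (p : seq E) (w : V) : Prop :=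
  if p is e :: p' then
    [/\ valid e, src e = u & if p' is [::] then rng e = w else chain (rng e) p' w]
  else False.

Lemma is_path_cons e e' p u w :
  is_path valid src rng u w [:: e, e' & p] <->
  [/\ valid e, src e = u, rng e = src e' & is_path valid src rng (rng e) w (e' :: p)].
Proof.
have nthS l : l < size (e' :: p) -> nth e [:: e, e' & p] l.+1 = nth e' (e' :: p) l.
  exact: set_nth_default.
split=> [[hs [hw [hv hc]]] | [hv hs he [_ [hw [hv' hc']]]]].
  split=> //; [exact: (hv 0) | exact: (hc 0) | split; first by rewrite (hc 0)].
  split=> //; split=> l hl; first by rewrite -nthS //; apply: (hv l.+1).
  by rewrite -!nthS //; [apply: (hc l.+1) | apply: ltnW].
split=> //; split=> //; split=> -[|l] hl; rewrite ?nthS //;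
  by [apply: hv' | apply: hc' | apply: ltnW].
Qed.

Lemma is_pathE u w p : is_path valid src rng u w p <-> chain u p w.
Proof.
elim: p u => [|e p IH] u //; case: p IH => [|e' p] IH.
  rewrite /is_path /=; split=> [[hs [hw [hv _]]] | [hv hs hw]].
    by split=> //; apply: (hv 0).
  by do 3!split=> //; case.
rewrite is_path_cons; split=> [[hv hs _ /IH hc] | [hv hs hc]]; first by split.
by split=> //; [case: hc | apply/IH].
Qed.

Lemma chain_cat u v w p q : chain u p v -> chain v q w -> chain u (p ++ q) w.
Proof.
elim: p u => [|e p IH] u //= [hv hs hp] hq; split=> //.
case: p hp IH => [|e' p] hp IH /=; last exact: IH.
by clear IH; case: q hq => // e'' q; rewrite hp.
Qed.

Lemma chain_rcons u v w p e :
  chain u p v -> valid e -> src e = v -> rng e = w -> chain u (rcons p e) w.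
Proof. by move=> hp hv hs hw; rewrite -cats1; apply: chain_cat hp _. Qed.

Lemma chain_mono (h : V -> nat) u p w :
  (forall e, valid e -> h (src e) <= h (rng e)) -> chain u p w -> h u <= h w.
Proof.
move=> hmono; elim: p u => [|e p IH] u //= [hv <- hp].
case: p hp IH => [|e' p] hp IH; first by rewrite -hp; apply: hmono.
exact: leq_trans (hmono e hv) (IH _ hp).
Qed.

Lemma closed_chain (X : V -> Prop) u p w :
  (forall e, valid e -> src e = u -> X (rng e)) ->
  (forall e, valid e -> X (src e) -> X (rng e)) ->
  chain u p w -> X w.
Proof.
move=> hfirst hclosed; elim: p u hfirst => [|e p IH] u hfirst //= [hv hs hp].
have hXe := hfirst e hv hs.
case: p hp IH => [|e' p] hp IH; first by rewrite -hp.
by apply: IH hp => e'' hv'' hs''; apply: hclosed => //; rewrite hs''.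
Qed.

Lemma chain_all (P : pred E) u p w :
  (forall e, valid e -> P e) -> chain u p w -> all P p.
Proof.
move=> hP; elim: p u => [|e p IH] u //= [hv _ hp]; rewrite hP //=.
by case: p hp IH => // e' p hp IH; apply: IH hp.
Qed.

Variable x0 : E.

Lemma chain_last u p w : chain u p w -> rng (last x0 p) = w.
Proof.
elim: p u x0 => [|e p IH] u y //= [_ _ hp].
by case: p hp IH => [|e' p] hp IH //; apply: IH hp.
Qed.

Definition interior_all (Q : V -> Prop) (p : seq E) :=
  forall l, l.+1 < size p -> Q (rng (nth x0 p l)).

Lemma interior_all_rcons (Q : V -> Prop) u v p e :
  chain u p v -> interior_all Q p -> Q v -> interior_all Q (rcons p e).
Proof.
move=> hp hin hv l; rewrite size_rcons ltnS leq_eqVlt => /orP [/eqP hl | hl].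
  rewrite nth_rcons -hl ltnSn (_ : l = (size p).-1) ?nth_last ?(chain_last hp) //.
  by rewrite -hl.
by rewrite nth_rcons ltnW //; apply: hin.
Qed.

Lemma interior_all_between (h : V -> nat) u p w :
  (forall e, valid e -> h (src e) <= h (rng e)) -> chain u p w ->
  interior_all (fun v => h u <= h v <= h w) p.
Proof.
move=> hmono; elim: p u => [|e p IH] u //= [hv <- hp].
case: p hp IH => [//|e' p] hp IH [_|l hl] /=.
  by rewrite hmono // (chain_mono hmono hp).
by case/andP: (IH _ hp l hl) => /(leq_trans (hmono e hv)) -> ->.
Qed.

Lemma chain_size_le (phi : V -> nat) (Q : V -> Prop) u p w :
  (forall e, valid e -> Q (rng e) -> phi (rng e) < phi (src e)) ->
  chain u p w -> interior_all Q p -> size p <= (phi u).+1.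
Proof.
move=> hdec; elim: p u => [|e p IH] u //= [hv <- hp].
case: p hp IH => [//|e' p] hp IH hin.
have := IH _ hp (fun l => hin l.+1); have := hdec e hv (hin 0 erefl); lia.
Qed.

End Chains.

Section Words.

Variables (T : eqType) (A : seq T).

Fixpoint words k : seq (seq T) :=
  if k is k'.+1 then [seq x :: w | x <- A, w <- words k'] else [:: [::]].

Lemma mem_words w : all (mem A) w -> w \in words (size w).
Proof.
elim: w => [|x w IH] //= /andP [hx hw].
by apply: (allpairs_f (fun x w => x :: w)) => //; apply: IH.
Qed.

Lemma uniq_listing (P : seq T -> Prop) N :
  (forall p, P p -> all (mem A) p /\ size p <= N) ->
  exists L, uniq L /\ (forall p, p \in L <-> P p).
Proof.
move=> hP; pose inP q := if excluded_middle_informative (P q) then true else false.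
exists (undup [seq q <- flatten [seq words k | k <- iota 0 N.+1] | inP q]).
split=> [|q]; first exact: undup_uniq.
rewrite mem_undup mem_filter /inP.
case: excluded_middle_informative => hq; last by split=> // /hq.
split=> // _; have [hA hN] := hP q hq.
by apply/flatten_mapP; exists (size q); [rewrite mem_iota | apply: mem_words].
Qed.

End Words.

Section Lambda.

Variables (n r : nat) (m : nat -> nat).
Hypothesis r_gt0 : 0 < r.

Lemma L_src_shift a b x :
  x < r -> L_src r m (a, b, (x + m a) %% r) = (a, x).
Proof.
move=> hx; congr (_, _); have hma := ltn_pmod (m a) r_gt0.
apply/eqP; rewrite -[X in _ == X](modn_small hx) -(eqn_modDr (m a)) -modnDmr.
by rewrite subnK ?modnDr ?modn_mod //; lia.
Qed.

Lemma L_rng_shift e :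
  L_valid n r e -> ((L_src r m e).2 + m (L_src r m e).1) %% r = (L_rng e).2.
Proof.
case: e => [[a b] k] /andP [_ hk] /=; have hma := ltn_pmod (m a) r_gt0.
rewrite modnDml -modnDmr subnK; last by lia.
by rewrite modnDr modn_small.
Qed.

Lemma L_level_mono e : L_valid n r e -> (L_src r m e).1 <= (L_rng e).1.
Proof. by case: e => [[a b] k] /andP [/andP []]. Qed.

Lemma L_rng_level_le e : L_valid n r e -> (L_rng e).1 <= n.
Proof. by case: e => [[a b] k] /andP [/andP []]. Qed.

Definition rep (v : vtx) := v.2 < gcdn (m v.1) r.

Definition Lpath := chain (L_valid n r) (L_src r m) L_rng.

Definition avoids_reps := interior_all L_rng (0, 0, 0) (fun v => ~~ rep v).


Definition rep_after l x c := (0 < c) && rep (l, (x + c * m l) %% r).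

Lemma rep_after_bounded l x : exists2 c, c <= r * r & rep_after l x c.
Proof.
(* Bezout: a * m_l = - gcd(m_l, r) mod r, so c = a * (y %/ g) + r moves y to y %% g. *)
have [a ha] := Bezoutl (m l) r_gt0; rewrite gcdnC => /dvdnP [K hK].
set g := gcdn (m l) r in hK.
have g_gt0 : 0 < g by rewrite gcdn_gt0 r_gt0 orbT.
have g_le : g <= r by apply: dvdn_leq => //; apply: dvdn_gcdr.
set y := x %% r; set q := y %/ g.
have hq : q < r by apply: leq_ltn_trans (leq_div _ _) (ltn_pmod _ _).
exists (a * q + r); first nia.
apply/andP; split; first by rewrite addn_gt0 r_gt0 orbT.
have -> : (x + (a * q + r) * m l) %% r = (y %% g + (q * K + m l) * r) %% r.
  by rewrite -modnDml -/y {1}(divn_eq y g) -/q; congr (_ %% r); nia.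
have hyg : y %% g < g by rewrite ltn_pmod.
by rewrite /rep /= -/g addnC modnMDl modn_small //; apply: leq_trans g_le.
Qed.

Lemma rep_after_exists l x : exists c, rep_after l x c.
Proof. by have [c _ hc] := rep_after_bounded l x; exists c. Qed.

Definition rep_dist l x := ex_minn (rep_after_exists l x).

Lemma rep_dist_spec l x : rep_after l x (rep_dist l x).
Proof. by rewrite /rep_dist; case: ex_minnP. Qed.

Lemma rep_dist_min l x c : rep_after l x c -> rep_dist l x <= c.
Proof. by rewrite /rep_dist; case: ex_minnP => d _; apply. Qed.

Lemma rep_dist_le l x : rep_dist l x <= r * r.
Proof.
by have [c hc /rep_dist_min hd] := rep_after_bounded l x; apply: leq_trans hd hc.
Qed.

Definition potential (v : vtx) := (n - v.1) * (r * r).+1 + rep_dist v.1 v.2.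

Lemma potential_le v : potential v < n.+1 * (r * r).+1.
Proof. by have := rep_dist_le v.1 v.2; rewrite /potential mulSn; nia. Qed.

Lemma potential_level_step a x :
  ~~ rep (a, (x + m a) %% r) -> potential (a, (x + m a) %% r) < potential (a, x).
Proof.
move=> hnrep; rewrite /potential /= ltn_add2l.
have /andP [D_gt0 hD] := rep_dist_spec a x; set D := rep_dist a x in D_gt0 hD *.
have D_gt1 : 1 < D.
  rewrite ltn_neqAle D_gt0 andbT; apply: contraNneq hnrep => D1.
  by move: hD; rewrite -D1 mul1n.
have shiftD : ((x + m a) %% r + D.-1 * m a) %% r = (x + D * m a) %% r.
  by rewrite modnDml -addnA -mulSn prednK.
have : rep_dist a ((x + m a) %% r) <= D.-1.
  by apply: rep_dist_min; rewrite /rep_after shiftD hD andbT -ltnS prednK.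
lia.
Qed.

Lemma potential_level_up a b x y : a < b <= n -> potential (b, y) < potential (a, x).
Proof.
move=> hab; have hW : (n - b).+1 * (r * r).+1 <= (n - a) * (r * r).+1.
  by rewrite leq_mul2r; apply/orP; right; lia.
by rewrite /potential /= mulSn in hW *; have := rep_dist_le b y; lia.
Qed.

Lemma potential_edge e :
  L_valid n r e -> ~~ rep (L_rng e) -> potential (L_rng e) < potential (L_src r m e).
Proof.
case: e => [[a b] k] he; have /andP [/andP [hab hbn] _] := he.
have [a_lt_b | b_le_a] := ltnP a b; first by rewrite potential_level_up ?a_lt_b.
have eab : b = a by apply/eqP; rewrite eqn_leq b_le_a hab.
subst b; have /= := L_rng_shift he; set x := (k + r - _) %% r => hk.
by rewrite /= -hk; apply: potential_level_step.
Qed.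

Lemma admissibleP i j s t p :
  admissible n r m i j s t p <-> Lpath (i, s) p (j, t) /\ avoids_reps p.
Proof.
split=> [[/is_pathE hp hadm] | [hp hav]].
  split=> // l hl.
  have /andP [hil hlj] := interior_all_between (0, 0, 0) (h := fst) L_level_mono hp hl.
  by move: (hadm l hl); rewrite /= hil hlj.
split; first exact/is_pathE.
by move=> l hl /=; have := hav l hl; rewrite /rep => /negbTE ->; rewrite andbF.
Qed.

Lemma admissible_size_le i j s t p :
  admissible n r m i j s t p -> size p <= n.+1 * (r * r).+1.
Proof.
case/admissibleP=> hp hav.
have := chain_size_le (Q := fun v => ~~ rep v) potential_edge hp hav.
by move/leq_trans; apply; apply: potential_le.
Qed.

Definition L_edges : seq Ledge :=
  [seq (ab, k) | ab <- [seq (a, b) | a <- iota 0 n.+1, b <- iota 0 n.+1], k <- iota 0 r].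

Lemma mem_L_edges e : L_valid n r e -> e \in L_edges.
Proof.
case: e => [[a b] k] /andP [/andP [hab hbn] hk].
apply: (allpairs_f (fun ab k => (ab, k))); last by rewrite mem_iota.
by apply: (allpairs_f (fun a b => (a, b))); rewrite mem_iota; lia.
Qed.

Lemma nadm_gt0 i j s t p : admissible n r m i j s t p -> 0 < nadm n r m i j s t.
Proof.
move=> hp.
have [L [uL hL]] :
    exists L, uniq L /\ (forall q, q \in L <-> admissible n r m i j s t q).
  apply: (uniq_listing (A := L_edges)) => q hq; split; last exact: admissible_size_le hq.
  by case/admissibleP: hq => hq _; apply: chain_all hq => e /mem_L_edges.
have ex : exists N L, uniq L /\
    (forall q, q \in L <-> admissible n r m i j s t q) /\ size L = N.
  by exists (size L), L.
(* [nadm] is the size of some listing chosen by [epsilon]; it only needs one to exist. *)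
rewrite /nadm; have [L' [_ [hL' <-]]] := epsilon_spec (inhabits 0) _ ex.
by have := proj2 (hL' p) hp; case: L' {hL'}.
Qed.

Lemma inH_L_edge e : L_valid n r e -> inH n r m (L_src r m e) -> inH n r m (L_rng e).
Proof. by move=> he hs X hX hbase; apply: (hX e he); apply: hs. Qed.

Definition B_vertex (v : vtx) := [/\ v.1 <= n, rep v & inH n r m v].

Definition B_reachable (v : vtx) :=
  exists q, chain (B_valid n r m) B_src B_rng (0, 0) q v.

Definition anchor (w : vtx) := B_vertex w /\ (w = (0, 0) \/ B_reachable w).

Definition anchored (v : vtx) :=
  inH n r m v /\ exists w p, [/\ anchor w, Lpath w p v & avoids_reps p].

Lemma anchor_origin : anchor (0, 0).
Proof.
split; last by left.
split=> //; first by rewrite /rep gcdn_gt0 r_gt0 orbT.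
by move=> X _ hbase; apply: hbase.
Qed.

Lemma B_valid_of_Lpath a s j t p :
  B_vertex (a, s) -> B_vertex (j, t) -> Lpath (a, s) p (j, t) -> avoids_reps p ->
  B_valid n r m (a, j, s, t, 1).
Proof.
move=> [_ hrs hHs] [hj hrt hHt] hp hav.
split; first by rewrite hj (chain_mono (h := fst) L_level_mono hp).
by do !split=> //; apply: (nadm_gt0 (p := p)); apply/admissibleP.
Qed.

Lemma anchored_B_reachable v : anchored v -> rep v -> v.1 <= n -> B_reachable v.
Proof.
case: v => j t [hH [[a s] [p [[hw hroot] hp hav]]]] hrep hj.
have hb := B_valid_of_Lpath hw (And3 hj hrep hH) hp hav.
case: hroot hb => [[-> ->] | [q hq]] hb; first by exists [:: (0, j, 0, t, 1)].
by exists (rcons q (a, j, s, t, 1)); apply: chain_rcons hq hb _ _.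
Qed.

Lemma anchored_hereditary : hereditary n r m anchored.
Proof.
move=> e he hsrc; have [hH [w [p [hw hp hav]]]] := hsrc.
split; first exact: inH_L_edge.
have [hrep | hnrep] := boolP (rep (L_src r m e)); last first.
  exists w, (rcons p e); split=> //; first exact: chain_rcons hp he _ _.
  exact: interior_all_rcons hp hav hnrep.
have hsn : (L_src r m e).1 <= n := leq_trans (L_level_mono he) (L_rng_level_le he).
exists (L_src r m e), [:: e]; split=> //.
by split; [split | right; apply: anchored_B_reachable].
Qed.

Lemma anchored_of_Lpath u p v : anchor u -> Lpath u p v -> anchored v.
Proof.
move=> hu; apply: (closed_chain _ anchored_hereditary) => e he hs.
split; last by exists u, [:: e].
by apply: inH_L_edge; rewrite // hs; case: hu => -[].
Qed.

Lemma Lpath_walk a b x c :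
  a <= b <= n -> x < r -> exists p, Lpath (a, x) p (b, (x + c.+1 * m a) %% r).
Proof.
move=> hab; elim: c x => [|c IH] x hx.
  exists [:: (a, b, (x + m a) %% r)]; split; last by rewrite mul1n.
    by rewrite /L_valid hab ltn_pmod.
  exact: L_src_shift.
have [[|e p] //] := IH ((x + m a) %% r) (ltn_pmod _ r_gt0).
rewrite /Lpath modnDml -addnA -mulSn => hp.
exists ((a, a, (x + m a) %% r) :: e :: p); split=> //; last exact: L_src_shift.
by case/andP: hab => hab hbn; rewrite /L_valid /= leqnn ltn_pmod // (leq_trans hab hbn).
Qed.

Lemma anchored_base l : l <= n -> anchored (l, 0).
Proof.
move=> hl; have [p] := Lpath_walk (a := 0) (b := l) (x := 0) r.-1 hl r_gt0.
by rewrite prednK // add0n modnMr; apply: anchored_of_Lpath anchor_origin.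
Qed.

End Lambda.

Unset Implicit Arguments.

Theorem lemma3p10 (n r : nat) (m : nat -> nat)
    (hn : 1 <= n) (hr : 1 <= r) (hm : forall i, i <= n -> 0 < m i)
    (i k : nat) (hi : i <= n) (hk : inS n r m i k) :
  exists p : seq Bedge,
    is_path (B_valid n r m) B_src B_rng (0, 0) (i, k) p.
Proof.
case: hk => hrep hH.
have anchored_ik : anchored n r m (i, k) :=
  hH _ (anchored_hereditary (m := m) hr) (anchored_base m hr).
have [q hq] := anchored_B_reachable hr anchored_ik hrep hi.
by exists q; apply/is_pathE.
Qed.
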